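(* There is an absolute constant $C$ such that for every alphabet $\Sigma$ of size $\sigma\ge 2$, every positive integer $d$, and every string $T$ over $\Sigma$ of length $n>d$, $\mathcal{S}(T,d)\le C\,d(n-d)$, i.e., $\mathcal{S}(T,d)\in O(d(n-d))$. This upper bound is tight when $\sigma\ge d+1$: there is an absolute constant $c>0$ such that for all integers $d,n,\sigma$ with $1\le d\le\sigma-1$ and $n>d$, there exists a string $T'$ of length $n$ over an alphabet of size $\sigma$ with $\mathcal{S}(T',d)\ge c\,d(n-d)$.
   Context: For a string $S$ over alphabet $\Sigma$, a string $w\in\Sigma^*$ is a minimal absent word (MAW) of $S$ if $w$ does not occur in $S$ but every proper substring of $w$ (including the empty string) occurs in $S$; $\mathsf{MAW}(S)$ is the set of all MAWs of $S$. $T[a..b]$ denotes the substring of $T$ from position $a$ to $b$. For a string $T$ of length $n>d$, $\mathcal{S}(T,d)=\sum_{i=1}^{n-d}|\mathsf{MAW}(T[i..i+d-1])\bigtriangleup\mathsf{MAW}(T[i+1..i+d])|$, where $\bigtriangleup$ is symmetric difference. *)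

From mathcomp Require Import all_boot all_order all_algebra.
From Stdlib Require Import ClassicalEpsilon.
Set Implicit Arguments. Unset Strict Implicit. Unset Printing Implicit Defensive.

Section MAW.
Variable Sigma : finType.

Definition proper_infix (u w : seq Sigma) : bool := infix u w && (u != w).

Definition is_maw (S w : seq Sigma) : Prop :=
  ~~ infix w S /\ forall u, proper_infix u w -> infix u S.

Lemma maw_size S w : is_maw S w -> size w <= (size S).+1.
Proof.
case=> nw H; case: w nw H => [|a w] nw H.
  by rewrite infix0s in nw.
have : infix w S.
  apply: H; rewrite /proper_infix infix_cons /=.
  apply/eqP=> e; have := congr1 size e; rewrite /= => /eqP.
  by rewrite -[X in X == _]addn0 -addn1 eqn_add2l.
by move/infixW/size_subseq.
Qed.

Definition word (L : nat) := {k : 'I_L & k.-tuple Sigma}.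

(* MAW(S), restricted to words of length < L; by maw_size this is all of
   MAW(S) as soon as (size S).+1 < L *)
Definition mawset (L : nat) (S : seq Sigma) : {set word L} :=
  [set x : word L | if excluded_middle_informative (is_maw S (tagged x : seq Sigma))
                    then true else false].

(* T[i+1 .. i+d] (1-indexed) = window T d i (0-indexed start i) *)
Definition window (T : seq Sigma) (d i : nat) : seq Sigma := take d (drop i T).

Definition symdiff (L : nat) (A B : {set word L}) : {set word L} :=
  (A :\: B) :|: (B :\: A).

Definition Scost (T : seq Sigma) (d : nat) : nat :=
  \sum_(i < size T - d)
     #|symdiff (mawset d.+2 (window T d i)) (mawset d.+2 (window T d i.+1))|.

End MAW.

From mathcomp Require Import all_boot all_order all_algebra zify.
From Stdlib Require Import ClassicalEpsilon.
Set Implicit Arguments. Unset Strict Implicit. Unset Printing Implicit Defensive.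

(* Consecutive windows of length d are a M and M b with |M| = d - 1.  A minimal
   absent word w of a M that is not one of M b either occurs in M b, and is then
   a suffix of M b, or is c v e where c v and v e occur in a M and one of them
   does not occur in M b, hence is a prefix of a M.  Such a w is determined by
   its length, resp. by the first occurrence in a M of the other one of c v and
   v e: of two different such words, the shorter would be a prefix of a factor
   of a M.  So at most 3(d + 1) MAWs are lost in a step and, reversing all
   words, at most 3(d + 1) are gained.  Conversely, when the letters of a M b
   are distinct, a and the words b y with y in M are MAWs of M b but not of
   a M, and every window of the word of residues j mod (d + 1) has distinct
   letters. *)

Definition init (T : Type) (s : seq T) := take (size s).-1 s.

Lemma init_cons_rcons (T : Type) (c : T) v e : init (c :: rcons v e) = c :: v.
Proof. by rewrite /init /= size_rcons -cats1 -cat_cons take_size_cat. Qed.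

Lemma size_uniq_le_code (T : eqType) (s : seq T) (g : T -> nat) K :
  uniq s -> {in s &, injective g} -> {in s, forall x, g x < K} -> size s <= K.
Proof.
move=> us g_inj g_lt; rewrite -(size_map g) -[K](size_iota 0).
apply: uniq_leq_size; first by rewrite map_inj_in_uniq.
by move=> _ /mapP[x xs ->]; rewrite mem_iota /= g_lt.
Qed.

Section Factors.
Variable T : eqType.
Implicit Types (s v X Y M : seq T) (a b c e : T).

Lemma prefix_size_prefix X s1 s2 :
  prefix s1 X -> prefix s2 X -> size s1 <= size s2 -> prefix s1 s2.
Proof. by rewrite !prefixE => /eqP E1 /eqP E2 le; rewrite -E2 take_takel // E1. Qed.

Lemma prefix_size_eq X s1 s2 :
  prefix s1 X -> prefix s2 X -> size s1 = size s2 -> s1 = s2.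
Proof. by rewrite !prefixE => /eqP E1 /eqP E2 e; rewrite -E1 -E2 e. Qed.

Lemma suffix_size_eq X s1 s2 :
  suffix s1 X -> suffix s2 X -> size s1 = size s2 -> s1 = s2.
Proof. by rewrite !suffixE => /eqP E1 /eqP E2 e; rewrite -E1 -E2 e. Qed.

Lemma prefix_drop_infix_index s X : infix s X -> prefix s (drop (infix_index s X) X).
Proof. by rewrite infixE prefixE. Qed.

Lemma infix_index_lt s X : infix s X -> infix_index s X < (size X).+1.
Proof. by rewrite -infixTindex. Qed.

(* If the words differed, the shorter one, [c v e] say, would be a prefix of
   [c' v'] and hence of X. *)
Lemma prefix_pair_eq X Y c v e c' v' e' :
  prefix (c :: v) X -> prefix (c' :: v') X ->
  prefix (rcons v e) Y -> prefix (rcons v' e') Y ->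
  ~~ prefix (c :: rcons v e) X -> ~~ prefix (c' :: rcons v' e') X ->
  c :: rcons v e = c' :: rcons v' e'.
Proof.
wlog le : c v e c' v' e' / size v <= size v'.
  move=> H p p' q q' n n'; case: (leqP (size v) (size v')) => le; first exact: H.
  by apply/esym/H => //; apply: ltnW.
move=> p p' q q' n _.
have /andP[/eqP cc _] : prefix (c :: v) (c' :: v') by apply: prefix_size_prefix p p' _.
subst c'.
move: le; rewrite leq_eqVlt => /orP[/eqP es | lt].
  case: (prefix_size_eq p p' (congr1 S es)) => vv'; subst v'.
  by rewrite (prefix_size_eq q q') // !size_rcons.
have vev' : prefix (rcons v e) v'.
  by apply: prefix_size_prefix q (prefix_trans (prefix_rcons v' e') q') _; rewrite size_rcons.
by case/negP: n; apply: prefix_trans p'; rewrite prefix_cons eqxx.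
Qed.

Lemma prefix_of_infix_cons a b M s :
  infix s (a :: M) -> ~~ infix s (rcons M b) -> prefix s (a :: M).
Proof.
rewrite infix_consl => /orP[// | sM]; case/negP.
exact: infix_trans sM (infix_rcons M b).
Qed.

End Factors.

Section MinimalAbsentWords.
Variable Sigma : finType.
Implicit Types (S w u v : seq Sigma) (b c e y : Sigma).

Lemma maw_infix S w u : is_maw S w -> infix u w -> size u < size w -> infix u S.
Proof.
case=> _ minw uw lt; apply: minw; rewrite /proper_infix uw /=.
by apply: contraTneq lt => ->; rewrite ltnn.
Qed.

Lemma maw_behead S w : is_maw S w -> infix (behead w) S.
Proof.
case: w => [[]|c w mw]; first by rewrite infix0s.
exact: maw_infix mw (infix_cons _ _) _.
Qed.

Lemma maw_init S w : is_maw S w -> infix (init w) S.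
Proof.
case: w => [[]|c w mw]; first by rewrite infix0s.
by apply: maw_infix mw (infix_take _ _) _; rewrite size_take /= ltnSn.
Qed.

Lemma maw_letter S c : is_maw S [:: c] <-> c \notin S.
Proof.
split=> [[]|cS]; first by rewrite infix1s.
split=> [|u /andP[]]; first by rewrite infix1s.
by rewrite infixs1 => /orP[/eqP -> _ | -> //]; rewrite infix0s.
Qed.

Lemma proper_infix_cons_rcons u c v e :
  proper_infix u (c :: rcons v e) -> infix u (c :: v) || infix u (rcons v e).
Proof.
case/andP=> /infixP[[|z p] [q E]] ne; last by case: E => _ ->; rewrite infix_infix orbT.
case/lastP: q E ne => [|q z]; first by rewrite cats0 /= => <-; rewrite eqxx.
by rewrite -rcons_cat -rcons_cons => /rcons_inj[-> _] _; rewrite prefix_infix.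
Qed.

Lemma maw_cons_rconsP S c v e :
  is_maw S (c :: rcons v e) <->
  [/\ ~~ infix (c :: rcons v e) S, infix (c :: v) S & infix (rcons v e) S].
Proof.
split=> [mw | [absent cv ve]].
  split; [exact: mw.1 | | exact: maw_behead mw].
  by rewrite -(init_cons_rcons c v e) (maw_init mw).
split=> // u /proper_infix_cons_rcons /orP[] /infix_trans; [exact | exact].
Qed.

Lemma maw_rcons_pair (M : seq Sigma) b y : b \notin M -> y \in M -> is_maw (rcons M b) [:: b; y].
Proof.
move=> bM yM; apply/(maw_cons_rconsP _ b [::] y); split.
- apply/infixP => -[p [q]]; rewrite /= lastI -rcons_cat => /rcons_inj[EM _].
  by move: bM; rewrite EM mem_cat mem_head orbT.
- by rewrite infix1s mem_rcons mem_head.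
- by rewrite /= infix1s mem_rcons inE yM orbT.
Qed.

Lemma maw_rev S w : is_maw S w -> is_maw (rev S) (rev w).
Proof.
case=> absent minw; split=> [|u /andP[uw ne]]; first by rewrite infix_rev.
rewrite -infix_revLR; apply: minw; rewrite /proper_infix infix_revLR uw /=.
by apply: contra ne => /eqP <-; rewrite revK.
Qed.

Lemma maw_revE S w : is_maw (rev S) (rev w) <-> is_maw S w.
Proof. by split=> [/maw_rev | /maw_rev //]; rewrite !revK. Qed.

End MinimalAbsentWords.

Section MawSets.
Variable Sigma : finType.
Implicit Types (S w : seq Sigma).

Definition seq_of_word L (x : word Sigma L) : seq Sigma := tagged x.

Lemma seq_of_word_inj L : injective (@seq_of_word L).
Proof.
case=> [k t] [k' t']; rewrite /seq_of_word /= => E.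
have kk' : k = k' by apply: val_inj; rewrite /= -(size_tuple t) -(size_tuple t') E.
by subst k'; congr existT; apply: val_inj.
Qed.

Lemma mawsetP L S (x : word Sigma L) : x \in mawset L S <-> is_maw S (seq_of_word x).
Proof. by rewrite inE; case: excluded_middle_informative. Qed.

Lemma card_mawsetD_le L S S' K :
  (forall s, uniq s -> {in s, forall w, is_maw S w /\ ~ is_maw S' w} -> size s <= K) ->
  #|mawset L S :\: mawset L S'| <= K.
Proof.
move=> bound; rewrite cardE -(size_map (@seq_of_word L)); apply: bound.
  by rewrite (map_inj_uniq (@seq_of_word_inj L)) enum_uniq.
move=> _ /mapP[x + ->]; rewrite mem_enum => /setDP[xS xS'].
by split=> [|/mawsetP]; [exact/mawsetP | rewrite (negbTE xS')].
Qed.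

Lemma card_mawsetD_ge L S S' s :
  uniq s -> {in s, forall w, [/\ size w < L, is_maw S w & ~ is_maw S' w]} ->
  size s <= #|mawset L S :\: mawset L S'|.
Proof.
move=> us sS; rewrite cardE -(size_map (@seq_of_word L)); apply: uniq_leq_size => // w ws.
have [lt wS wS'] := sS w ws; apply/mapP; exists (existT _ (Ordinal lt) (in_tuple w)) => //.
rewrite mem_enum; apply/setDP; split; first exact/mawsetP.
by apply/negP => /mawsetP.
Qed.

End MawSets.

Section LostWords.
Variables (Sigma : finType) (a b : Sigma) (M : seq Sigma).
Implicit Types (u w : seq Sigma).

Definition lost w := is_maw (a :: M) w /\ ~ is_maw (rcons M b) w.

Lemma lost_suffix w : lost w -> infix w (rcons M b) -> suffix w (rcons M b).
Proof.
case=> [[absent _] _]; rewrite infix_rconsl => /orP[// | wM].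
by case/negP: absent; apply: infix_trans wM (infix_cons _ _).
Qed.

Lemma lost_cons_rcons w :
  lost w -> ~~ infix w (rcons M b) -> exists c v e, w = c :: rcons v e.
Proof.
case: w => [[[]]|c w]; first by rewrite infix0s.
case/lastP: w => [|v e] [mw mw'] absent; last by exists c, v, e.
by case: mw'; apply/maw_letter; rewrite -infix1s.
Qed.

Lemma lost_prefix_behead w : lost w -> ~~ infix w (rcons M b) ->
  ~~ prefix (init w) (a :: M) -> prefix (behead w) (a :: M).
Proof.
move=> lw absent; have [c [v [e Ew]]] := lost_cons_rcons lw absent.
case: lw; rewrite {}Ew init_cons_rcons [behead _]/= in absent *.
move=> /maw_cons_rconsP[_ cv ve] mw' ncv.
(* [c v] is not a prefix of [a M], so it occurs in [M b]; if [v e] did too,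
   [w] would be a MAW of [M b]. *)
apply: (prefix_of_infix_cons (b := b) ve); apply: contra_notN mw' => ve'.
apply/maw_cons_rconsP; split=> //.
by apply: contraNT ncv; apply: prefix_of_infix_cons.
Qed.

Lemma lost_eq_behead_index u w : lost u -> lost w ->
  ~~ infix u (rcons M b) -> ~~ infix w (rcons M b) ->
  prefix (init u) (a :: M) -> prefix (init w) (a :: M) ->
  infix_index (behead u) (a :: M) = infix_index (behead w) (a :: M) -> u = w.
Proof.
move=> lu lw nu nw pu pw same.
have nu' : ~~ prefix u (a :: M) := contra (@prefixW _ _ _) lu.1.1.
have nw' : ~~ prefix w (a :: M) := contra (@prefixW _ _ _) lw.1.1.
have qu := prefix_drop_infix_index (maw_behead lu.1).
have qw := prefix_drop_infix_index (maw_behead lw.1).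
have [c [v [e Eu]]] := lost_cons_rcons lu nu.
have [c' [v' [e' Ew]]] := lost_cons_rcons lw nw.
move: pu pw qu qw nu' nw'; rewrite same Eu Ew !init_cons_rcons ![behead _]/=.
exact: prefix_pair_eq.
Qed.

Lemma lost_eq_init_index u w : lost u -> lost w ->
  ~~ infix u (rcons M b) -> ~~ infix w (rcons M b) ->
  ~~ prefix (init u) (a :: M) -> ~~ prefix (init w) (a :: M) ->
  infix_index (init u) (a :: M) = infix_index (init w) (a :: M) -> u = w.
Proof.
move=> lu lw nu nw npu npw same.
have qu := lost_prefix_behead lu nu npu.
have qw := lost_prefix_behead lw nw npw.
have pu := prefix_drop_infix_index (maw_init lu.1).
have pw := prefix_drop_infix_index (maw_init lw.1).
rewrite same in pu; set D := drop _ (a :: M) in pu pw.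
have absent_D x : lost x -> ~~ prefix x D.
  by move=> lx; apply: contra lx.1.1 => /prefixW /infix_trans; apply; apply: infix_drop.
have nu' := absent_D u lu; have nw' := absent_D w lw.
have [c [v [e Eu]]] := lost_cons_rcons lu nu.
have [c' [v' [e' Ew]]] := lost_cons_rcons lw nw.
move: pu pw qu qw nu' nw'; rewrite Eu Ew !init_cons_rcons ![behead _]/=.
exact: prefix_pair_eq.
Qed.

Lemma lost_count s : uniq s -> {in s, forall w, lost w} -> size s <= 3 * (size M).+2.
Proof.
move=> us ls.
pose occurs w := infix w (rcons M b).
pose starts w := prefix (init w) (a :: M).
set s' := filter (predC occurs) s.
have -> : size s = size (filter occurs s) + size (filter starts s')
                   + size (filter (predC starts) s').
  by rewrite -addnA !size_filter (count_predC starts) /s' size_filter count_predC.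
have occurring : size (filter occurs s) <= (size M).+2.
  apply: (size_uniq_le_code (g := size)); first exact: filter_uniq.
    move=> u w; rewrite !mem_filter => /andP[ou /ls lu] /andP[ow /ls lw].
    exact: suffix_size_eq (lost_suffix lu ou) (lost_suffix lw ow).
  move=> w; rewrite mem_filter => /andP[ow /ls lw].
  by have := size_suffix (lost_suffix lw ow); rewrite size_rcons.
have init_prefix : size (filter starts s') <= (size M).+2.
  apply: (size_uniq_le_code (g := fun w => infix_index (behead w) (a :: M))).
  - by rewrite !filter_uniq.
  - move=> u w; rewrite !mem_filter => /and3P[pu ou /ls lu] /and3P[pw ow /ls lw].
    exact: lost_eq_behead_index.
  - by move=> w; rewrite !mem_filter => /and3P[_ _ /ls/proj1/maw_behead/infix_index_lt].
have behead_prefix : size (filter (predC starts) s') <= (size M).+2.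
  apply: (size_uniq_le_code (g := fun w => infix_index (init w) (a :: M))).
  - by rewrite !filter_uniq.
  - move=> u w; rewrite !mem_filter => /and3P[pu ou /ls lu] /and3P[pw ow /ls lw].
    exact: lost_eq_init_index.
  - by move=> w; rewrite !mem_filter => /and3P[_ _ /ls/proj1/maw_init/infix_index_lt].
lia.
Qed.

End LostWords.

Section ConsecutiveWindows.
Variables (Sigma : finType) (L : nat).

Lemma card_symdiff_mawset_le (a b : Sigma) M :
  #|symdiff (mawset L (a :: M)) (mawset L (rcons M b))| <= 6 * (size M).+2.
Proof.
rewrite (mulnDl 3 3); apply: leq_trans (leq_card_setU _ _) (leq_add _ _).
  by apply: card_mawsetD_le => s; apply: lost_count.
apply: card_mawsetD_le => s us gained; rewrite -(size_map rev) -(size_rev M).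
apply: (lost_count (a := b) (b := a)); first by rewrite (map_inj_uniq (inv_inj (@revK _))).
move=> _ /mapP[w /gained[wS wS'] ->].
by split; [rewrite -rev_rcons; apply: maw_rev | rewrite -rev_cons maw_revE].
Qed.

Lemma card_symdiff_mawset_ge (a b : Sigma) M : 2 < L -> uniq (a :: rcons M b) ->
  (size M).+1 <= #|symdiff (mawset L (a :: M)) (mawset L (rcons M b))|.
Proof.
move=> L_gt2; rewrite /= mem_rcons inE negb_or rcons_uniq => /and3P[/andP[ab aM] bM uM].
apply: leq_trans (subset_leq_card (subsetUr (mawset L (a :: M) :\: mawset L (rcons M b)) _)).
apply: leq_trans (card_mawsetD_ge (s := [:: a] :: [seq [:: b; y] | y <- M]) _ _).
- by rewrite /= size_map.
- rewrite /= map_inj_uniq ?uM ?andbT => [|y z [] //].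
  by apply/mapP => -[].
move=> _ /predU1P[-> | /mapP[y yM ->]].
  split; first exact: ltnW L_gt2.
    by apply/maw_letter; rewrite mem_rcons inE negb_or ab.
  by move/maw_letter; rewrite inE eqxx.
split=> //; first exact: maw_rcons_pair.
move/(maw_cons_rconsP _ b [::] y) => [_ + _]; rewrite infix1s inE.
by rewrite (negPf bM) orbF eq_sym (negPf ab).
Qed.

End ConsecutiveWindows.

Lemma consecutive_windows (Sigma : finType) (T : seq Sigma) d i :
  0 < d -> i + d < size T ->
  exists a M b, [/\ take d.+1 (drop i T) = a :: rcons M b,
    window T d i = a :: M, window T d i.+1 = rcons M b & size M = d.-1].
Proof.
move=> d_gt0 lt; have : size (take d.+1 (drop i T)) = d.+1.
  by rewrite size_takel // size_drop; lia.
case E: (take _ _) => [|a t] //= [sizet].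
case/lastP: t E sizet => [|M b] E; rewrite ?size_rcons => sizeM; first by subst d.
exists a, M, b; split=> //.
- by rewrite /window -(take_takel _ (leqnSn d)) E -sizeM /= -cats1 take_size_cat.
- by rewrite /window -add1n -drop_drop take_drop addn1 E /= drop0.
- by rewrite -sizeM.
Qed.

Lemma Scost_le (Sigma : finType) (T : seq Sigma) d :
  0 < d -> Scost T d <= 12 * (d * (size T - d)).
Proof.
move=> d_gt0; apply: (@leq_trans (\sum_(i < size T - d) 12 * d)).
  apply: leq_sum => i _.
  have lt : i + d < size T by have := ltn_ord i; lia.
  have [a [M [b [_ -> -> sizeM]]]] := consecutive_windows d_gt0 lt.
  by apply: leq_trans (card_symdiff_mawset_le _ _ _ _) _; rewrite sizeM; lia.
by rewrite sum_nat_const card_ord; lia.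
Qed.

Lemma Scost_ge (Sigma : finType) (T : seq Sigma) d : 0 < d ->
  (forall i, i + d < size T -> uniq (take d.+1 (drop i T))) ->
  d * (size T - d) <= Scost T d.
Proof.
move=> d_gt0 uniq_win; apply: (@leq_trans (\sum_(i < size T - d) d)).
  by rewrite sum_nat_const card_ord mulnC.
apply: leq_sum => i _.
have lt : i + d < size T by have := ltn_ord i; lia.
have [a [M [b [E -> -> sizeM]]]] := consecutive_windows d_gt0 lt.
have distinct : uniq (a :: rcons M b) by rewrite -E uniq_win.
apply: leq_trans (card_symdiff_mawset_ge (L := d.+2) d_gt0 distinct); lia.
Qed.

Lemma eq_modn_window m i x y :
  i <= x < i + m -> i <= y < i + m -> x = y %[mod m] -> x = y.
Proof.
wlog le : x y / x <= y => [wlog_le|] hx hy.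
  by case: (leqP x y) => [|/ltnW] le eq_xy; [exact: wlog_le | apply/esym/wlog_le].
move/esym/eqP; rewrite eqn_mod_dvd //.
have [|pos /(dvdn_leq pos)] := posnP (y - x); lia.
Qed.

Definition residue_word sigma d n : seq 'I_sigma.+1 :=
  [seq inord (j %% d.+1) | j <- iota 0 n].

Lemma residue_word_windows_uniq sigma d n i : d <= sigma -> i + d < n ->
  uniq (take d.+1 (drop i (residue_word sigma d n))).
Proof.
move=> d_le lt; rewrite -map_drop -map_take drop_iota take_iota add0n.
rewrite (minn_idPl _); last lia.
rewrite map_inj_in_uniq ?iota_uniq // => x y; rewrite !mem_iota => hx hy.
have residue_lt z : z %% d.+1 < sigma.+1 by apply: leq_trans (ltn_pmod _ _) _.
move/(congr1 val); rewrite /= !inordK //; exact: eq_modn_window hx hy.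
Qed.

Import Order.TTheory GRing.Theory Num.Theory.
Local Open Scope ring_scope.

Theorem lemma16 :
  (exists C : rat, forall (Sigma : finType), (2 <= #|Sigma|)%N ->
     forall (d : nat) (T : seq Sigma), (0 < d)%N -> (d < size T)%N ->
       (Scost T d)%:R <= C * (d * (size T - d))%:R)
  /\
  (exists c : rat, 0 < c /\
     forall (d n sigma : nat), (1 <= d)%N -> (d <= sigma - 1)%N -> (d < n)%N ->
       exists T' : seq 'I_sigma, size T' = n /\
         c * (d * (n - d))%:R <= (Scost T' d)%:R).
Proof.
split.
  exists 12 => Sigma _ d T d_gt0 _.
  by rewrite -natrM ler_nat Scost_le.
exists 1; split=> // d n [|sigma] d_gt0 d_le d_lt.
  by move: d_le d_gt0; rewrite leqn0 => /eqP ->.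
exists (residue_word sigma d n); split; first by rewrite size_map size_iota.
have := Scost_ge (T := residue_word sigma d n) d_gt0; rewrite size_map size_iota.
rewrite mul1r ler_nat; apply=> i; apply: residue_word_windows_uniq.
by rewrite subn1 in d_le.
Qed.
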